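(* Consider the following model. Constants $\alpha,\beta\in[0,1]$ satisfy $0<\alpha+\beta\le 1$ and $\alpha\ge\beta$; let $\eta=\frac{\alpha}{1-\beta}$. An agent has innate opinion $x_0\in[-1,1]$, and at every time $k=0,1,2,\dots$ the platform recommends the same content $u_k=u_0\in[-1,1]$. The agent chooses $\mathrm{clk}_k\in\{0,1\}$, and its opinion evolves by $$x_{k}=\begin{cases}\alpha x_0+\beta x_{k-1}+(1-\alpha-\beta)u_{k-1}, & \mathrm{clk}_{k-1}=1,\\ \frac{\alpha}{\alpha+\beta}x_0+\frac{\beta}{\alpha+\beta}x_{k-1}, & \mathrm{clk}_{k-1}=0.\end{cases}$$ Time is divided into consecutive blocks of length $s\in\mathbb{N}$, $s\ge1$, block $i\ge0$ consisting of times $is,\dots,is+s-1$; in block $i$ the agent clicks at times $is,\dots,is+T_i-1$ and does not click at the remaining times of the block. Let $T_0=s$, and let $x_i^{(p)}:=x_{is}$ be the opinion at the beginning of block $i$ under policy $p$, where: - policy 1 (fixed): $T_i=T_0$ for all $i$; - policy 2 (decreasing): given $\kappa>1$, $T_{i+1}=\lfloor T_i/\kappa\rfloor$; - policy 3 (adaptive decreasing): given an integer $\tau\ge1$ and $x_{\text{drift}}>0$, $T_{i+1}=\max\{0,T_i-\tau\}$ if $|x_{(i+1)s}-x_0|\ge x_{\text{drift}}$, and $T_{i+1}=T_i$ otherwise. Then: (a) $\lim_{i\to\infty}x_i^{(1)}=\eta x_0+(1-\eta)u_0$; (b) $\lim_{i\to\infty}x_i^{(2)}=x_0$; (c) if $x_0<u_0$,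 then $x_0\le\lim_{i\to\infty}x_i^{(3)}\le\min\{1,x_0+x_{\text{drift}}\}$; otherwise $\max\{-1,x_0-x_{\text{drift}}\}\le\lim_{i\to\infty}x_i^{(3)}\le x_0$.
   Context: The model describes an agent interacting with a recommendation platform that always recommends the same content $u_0$; $\mathrm{clk}_k=1$ means the agent consumes the recommended content at time $k$. *)

From Stdlib Require Import Reals Lra Lia ZArith Arith.
Open Scope R_scope.

(* One step of the opinion dynamics: [c] = clk_{k-1}, [x] = x_{k-1}. *)
Definition step (alpha beta x0 u0 : R) (c : bool) (x : R) : R :=
  if c then alpha * x0 + beta * x + (1 - alpha - beta) * u0
  else alpha / (alpha + beta) * x0 + beta / (alpha + beta) * x.

Fixpoint opinion (alpha beta x0 u0 : R) (clk : nat -> bool) (k : nat) : R :=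
  match k with
  | O => x0
  | S k' => step alpha beta x0 u0 (clk k') (opinion alpha beta x0 u0 clk k')
  end.

Definition clicks (s : nat) (T : nat -> nat) (k : nat) : bool :=
  Nat.ltb (k mod s)%nat (T (k / s)%nat).

Fixpoint T_dec (kappa : R) (s : nat) (i : nat) : nat :=
  match i with
  | O => s
  | S i' => Z.to_nat (Int_part (INR (T_dec kappa s i') / kappa))
  end.

From Pilot Require Import Defs.
From Stdlib Require Import Reals Lra Lia ZArith Arith Classical.
Open Scope R_scope.

(* Each step is an affine map x |-> p x + q whose slope p is beta or
   beta / (alpha + beta); since beta <= alpha, both lie in [0, 1/2].  Hence the
   map sending the opinion at the start of a block to the opinion at the start
   of the next one is an affine contraction that depends only on the number t
   of clicks in the block.  Once T_i is constant -- from the start for policy 1,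
   from block s on for policy 2 (where it is 0), and eventually for policy 3
   because a nonincreasing sequence of naturals stabilises -- the block starts
   converge geometrically to the fixed point of that contraction: it is
   eta x0 + (1 - eta) u0 when every step clicks and x0 when none does.  For
   policy 3 every opinion lies between x0 and u0, and once T has stabilised at
   a positive value the drift test can no longer fire, so the limit stays
   within x_drift of x0. *)

Lemma affine_iter_cv (u : nat -> R) (a b L : R) (N : nat) :
  0 <= a < 1 -> a * L + b = L ->
  (forall i, (N <= i)%nat -> u (S i) = a * u i + b) -> Un_cv u L.
Proof.
  intros Ha HL Hu.
  assert (Hdev : forall n, u (n + N)%nat - L = a ^ n * (u N - L)).
  { induction n as [|n IH]; simpl; [ring|].
    rewrite Hu by lia.
    transitivity (a * (u (n + N)%nat - L) + (a * L + b - L)); [ring|].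
    rewrite IH, HL; ring. }
  apply CV_shift with N. intros eps Heps.
  set (c := Rabs (u N - L)).
  assert (Hc : 0 <= c) by apply Rabs_pos.
  destruct (pow_lt_1_zero a) with (y := eps / (c + 1)) as [M HM].
  - rewrite Rabs_pos_eq; lra.
  - apply Rdiv_lt_0_compat; lra.
  - exists M. intros n Hn. unfold R_dist.
    rewrite Hdev, Rabs_mult. fold c.
    specialize (HM n Hn).
    apply (Rmult_lt_compat_r (c + 1)) in HM; [|lra].
    replace (eps / (c + 1) * (c + 1)) with eps in HM by (field; lra).
    pose proof (Rabs_pos (a ^ n)). nra.
Qed.

Lemma Un_cv_const (c : R) : Un_cv (fun _ => c) c.
Proof.
  intros eps Heps. exists 0%nat. intros n _.
  unfold R_dist. rewrite Rminus_diag, Rabs_R0. exact Heps.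
Qed.

Lemma Un_cv_eventually_bounded (u : nat -> R) (L lo hi : R) (N : nat) :
  Un_cv u L -> (forall i, (N <= i)%nat -> lo <= u i <= hi) -> lo <= L <= hi.
Proof.
  intros Hu Hb. pose proof (CV_shift' u N L Hu) as HuN.
  split.
  - apply (Rle_cv_lim (Un := fun _ => lo) (Vn := fun n => u (n + N)%nat));
      [intros n; apply Hb; lia | apply Un_cv_const | exact HuN].
  - apply (Rle_cv_lim (Un := fun n => u (n + N)%nat) (Vn := fun _ => hi));
      [intros n; apply Hb; lia | exact HuN | apply Un_cv_const].
Qed.

Lemma nonincreasing_nat_stabilizes (f : nat -> nat) :
  (forall i, (f (S i) <= f i)%nat) -> exists N, forall i, (N <= i)%nat -> f i = f N.
Proof.
  remember (f 0%nat) as m eqn:Hm. revert f Hm.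
  induction m as [m IH] using lt_wf_ind; intros f Hm Hf.
  assert (Hmono : forall i j, (i <= j)%nat -> (f j <= f i)%nat).
  { intros i j Hij. induction Hij as [|j _ IHj]; [lia|]. specialize (Hf j). lia. }
  destruct (classic (exists i, (f i < m)%nat)) as [[i Hi] | Hnone].
  - destruct (IH (f i) Hi (fun k => f (i + k)%nat)) as [N HN].
    + now rewrite Nat.add_0_r.
    + intros k. rewrite Nat.add_succ_r. apply Hf.
    + exists (i + N)%nat. intros j Hj.
      replace j with (i + (j - i))%nat by lia. apply HN. lia.
  - exists 0%nat. intros i _.
    assert (~ (f i < m)%nat) by (intros Hi; apply Hnone; now exists i).
    pose proof (Hmono 0%nat i (Nat.le_0_l i)). lia.
Qed.

Lemma floor_div_le_pred (kappa : R) (n : nat) :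
  1 < kappa -> (Z.to_nat (Int_part (INR n / kappa)) <= n - 1)%nat.
Proof.
  intros Hk. destruct (base_Int_part (INR n / kappa)) as [Hfloor _].
  set (z := Int_part (INR n / kappa)) in *.
  destruct (Z_le_gt_dec z 0) as [Hz|Hz]; [destruct z; simpl; lia|].
  assert (Hz1 : 1 <= IZR z) by (apply IZR_le; lia).
  assert (Hdiv : INR n / kappa * kappa = INR n) by (field; lra).
  assert (Hlt : IZR z < IZR (Z.of_nat n)) by (rewrite <- INR_IZR_INZ; nra).
  apply lt_IZR in Hlt. lia.
Qed.

Lemma T_dec_le (kappa : R) (s i : nat) : 1 < kappa -> (T_dec kappa s i <= s - i)%nat.
Proof.
  intros Hk. induction i as [|i IH]; simpl; [lia|].
  pose proof (floor_div_le_pred kappa (T_dec kappa s i) Hk). lia.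
Qed.

Lemma clicks_in_block (s : nat) (T : nat -> nat) (i j : nat) :
  (j < s)%nat -> clicks s T (i * s + j) = Nat.ltb j (T i).
Proof.
  intros Hj. unfold clicks.
  rewrite Nat.add_comm, Nat.div_add, Nat.Div0.mod_add by lia.
  now rewrite Nat.mod_small, Nat.div_small by lia.
Qed.

Section Dynamics.

Variables alpha beta x0 u0 : R.
Hypothesis hb : 0 <= beta.
Hypothesis hge : beta <= alpha.
Hypothesis hab : 0 < alpha + beta <= 1.

Local Notation step := (step alpha beta x0 u0).
Local Notation opinion := (opinion alpha beta x0 u0).

Lemma step_between (c : bool) (x : R) :
  Rmin x0 u0 <= x <= Rmax x0 u0 -> Rmin x0 u0 <= step c x <= Rmax x0 u0.
Proof.
  assert (0 <= alpha) by lra.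
  pose proof (Rmin_l x0 u0). pose proof (Rmin_r x0 u0).
  pose proof (Rmax_l x0 u0). pose proof (Rmax_r x0 u0).
  set (m := Rmin x0 u0) in *. set (M := Rmax x0 u0) in *.
  intros Hx. destruct c; unfold Defs.step.
  - split; nra.
  - set (p := beta / (alpha + beta)).
    assert (Hp : p * (alpha + beta) = beta) by (unfold p; field; lra).
    replace (alpha / (alpha + beta)) with (1 - p) by (unfold p; field; lra).
    assert (0 <= p <= 1) by (split; nra).
    split; nra.
Qed.

Lemma opinion_between (clk : nat -> bool) (k : nat) :
  Rmin x0 u0 <= opinion clk k <= Rmax x0 u0.
Proof.
  induction k as [|k IH]; simpl.
  - split; [apply Rmin_l | apply Rmax_l].
  - now apply step_between.
Qed.

Lemma step_no_click_fixes_x0 : step false x0 = x0.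
Proof. unfold Defs.step. field. lra. Qed.

Lemma step_click_fixes (L : R) :
  beta <> 1 -> L = alpha / (1 - beta) * x0 + (1 - alpha / (1 - beta)) * u0 ->
  step true L = L.
Proof.
  intros Hb1 ->. unfold Defs.step. field.
  intros H. apply Hb1. lra.
Qed.

Definition step_slope (c : bool) : R := if c then beta else beta / (alpha + beta).

Lemma step_affine (c : bool) (x : R) : step c x = step_slope c * x + step c 0.
Proof. destruct c; unfold Defs.step, step_slope; ring. Qed.

Lemma step_slope_bounds (c : bool) : 0 <= step_slope c <= / 2.
Proof.
  destruct c; unfold step_slope; [lra|].
  set (p := beta / (alpha + beta)).
  assert (Hp : p * (alpha + beta) = beta) by (unfold p; field; lra).
  split; nra.
Qed.

Fixpoint run_block (t j : nat) (x : R) : R :=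
  match j with
  | O => x
  | S j' => step (Nat.ltb j' t) (run_block t j' x)
  end.

Lemma opinion_next_block (s : nat) (T : nat -> nat) (i : nat) :
  (1 <= s)%nat ->
  opinion (clicks s T) (S i * s) = run_block (T i) s (opinion (clicks s T) (i * s)).
Proof.
  intros Hs.
  enough (Hj : forall j, (j <= s)%nat ->
    opinion (clicks s T) (i * s + j) = run_block (T i) j (opinion (clicks s T) (i * s)))
    by (rewrite Nat.mul_succ_l; apply Hj; lia).
  induction j as [|j IH]; intros Hj; [now rewrite Nat.add_0_r|].
  rewrite Nat.add_succ_r. simpl.
  rewrite clicks_in_block, IH by lia. reflexivity.
Qed.

Lemma run_block_affine (t j : nat) :
  exists a, 0 <= a <= (/ 2) ^ j /\ forall x, run_block t j x = a * x + run_block t j 0.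
Proof.
  induction j as [|j [a [Ha Hx]]]; simpl.
  - exists 1. split; [lra|]. intros x. ring.
  - set (c := Nat.ltb j t). pose proof (step_slope_bounds c).
    exists (step_slope c * a). split; [split; nra|].
    intros x. rewrite (step_affine c (run_block t j x)), (step_affine c (run_block t j 0)), Hx.
    ring.
Qed.

Lemma run_block_fixed (t j : nat) (L : R) :
  (forall k, (k < j)%nat -> step (Nat.ltb k t) L = L) -> run_block t j L = L.
Proof.
  intros Hfix. induction j as [|j IH]; simpl; [reflexivity|].
  rewrite IH by (intros k Hk; apply Hfix; lia). apply Hfix. lia.
Qed.

Lemma run_block_contraction (t j : nat) :
  (1 <= j)%nat -> exists a, 0 <= a < 1 /\ forall x, run_block t j x = a * x + run_block t j 0.
Proof.
  intros Hj. destruct (run_block_affine t j) as [a [Ha Hx]].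
  exists a. split; [|exact Hx].
  pose proof (pow_lt_1_compat (/ 2) j ltac:(lra) ltac:(lia)). lra.
Qed.

Lemma run_block_has_fixpoint (t j : nat) : (1 <= j)%nat -> exists L, run_block t j L = L.
Proof.
  intros Hj. destruct (run_block_contraction t j Hj) as [a [Ha Hx]].
  exists (run_block t j 0 / (1 - a)). rewrite Hx. field. lra.
Qed.

Lemma run_block_iter_cv (u : nat -> R) (t j N : nat) (L : R) :
  (1 <= j)%nat -> run_block t j L = L ->
  (forall i, (N <= i)%nat -> u (S i) = run_block t j (u i)) -> Un_cv u L.
Proof.
  intros Hj HL Hu. destruct (run_block_contraction t j Hj) as [a [Ha Hx]].
  apply (affine_iter_cv u a (run_block t j 0) L N Ha).
  - now rewrite <- Hx.
  - intros i Hi. now rewrite Hu, Hx.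
Qed.

Variable s : nat.
Hypothesis hs : (1 <= s)%nat.

Local Notation block_start T i := (opinion (clicks s T) (i * s)).

Lemma fixed_policy_cv :
  Un_cv (fun i => block_start (fun _ => s) i)
        (alpha / (1 - beta) * x0 + (1 - alpha / (1 - beta)) * u0).
Proof.
  apply (run_block_iter_cv _ s s 0); [exact hs| |].
  - apply run_block_fixed. intros k Hk.
    replace (Nat.ltb k s) with true by (symmetry; apply Nat.ltb_lt; lia).
    apply step_click_fixes; [lra | reflexivity].
  - intros i _. now apply opinion_next_block.
Qed.

Lemma run_block_no_click_fixes_x0 : run_block 0 s x0 = x0.
Proof.
  apply run_block_fixed. intros k _.
  replace (Nat.ltb k 0) with false by (symmetry; apply Nat.ltb_ge; lia).
  apply step_no_click_fixes_x0.
Qed.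

Lemma decreasing_policy_cv (kappa : R) :
  1 < kappa -> Un_cv (fun i => block_start (T_dec kappa s) i) x0.
Proof.
  intros Hk. apply (run_block_iter_cv _ 0 s s); [exact hs | apply run_block_no_click_fixes_x0 |].
  intros i Hi. rewrite opinion_next_block by exact hs.
  pose proof (T_dec_le kappa s i Hk).
  now replace (T_dec kappa s i) with 0%nat by lia.
Qed.

Section Adaptive.

Variables (tau : nat) (xdrift : R) (T : nat -> nat).
Hypothesis htau : (1 <= tau)%nat.
Hypothesis hT : forall i : nat,
  T (S i) =
    if Rle_dec xdrift (Rabs (block_start T (S i) - x0)) then (T i - tau)%nat else T i.

Lemma adaptive_T_nonincreasing (i : nat) : (T (S i) <= T i)%nat.
Proof. rewrite hT. destruct (Rle_dec _ _); lia. Qed.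

Lemma adaptive_no_drift (i : nat) :
  (0 < T i)%nat -> T (S i) = T i -> Rabs (block_start T (S i) - x0) < xdrift.
Proof.
  intros Hpos Hstay. pose proof (hT i) as Hi. rewrite Hstay in Hi.
  destruct (Rle_dec _ _) as [Hle|Hlt]; [lia | now apply Rnot_le_lt].
Qed.

Lemma adaptive_policy_limit :
  0 < xdrift ->
  exists L, Un_cv (fun i => block_start T i) L /\
            Rmin x0 u0 <= L <= Rmax x0 u0 /\ Rabs (L - x0) <= xdrift.
Proof.
  intros Hxd.
  destruct (nonincreasing_nat_stabilizes T adaptive_T_nonincreasing) as [N HN].
  destruct (run_block_has_fixpoint (T N) s hs) as [L HL].
  assert (Hrec : forall i, (N <= i)%nat ->
            block_start T (S i) = run_block (T N) s (block_start T i)).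
  { intros i Hi. rewrite <- (HN i Hi). now apply opinion_next_block. }
  assert (Hcv : Un_cv (fun i => block_start T i) L)
    by exact (run_block_iter_cv _ (T N) s N L hs HL Hrec).
  exists L. split; [exact Hcv|]. split.
  - apply (Un_cv_eventually_bounded _ L _ _ 0 Hcv). intros i _. apply opinion_between.
  - destruct (Nat.eq_dec (T N) 0) as [Ht0|Ht0].
    + rewrite Ht0 in Hrec.
      assert (Hx0 : Un_cv (fun i => block_start T i) x0)
        by exact (run_block_iter_cv _ 0 s N x0 hs run_block_no_click_fixes_x0 Hrec).
      rewrite (UL_sequence _ _ _ Hcv Hx0), Rminus_diag, Rabs_R0. lra.
    + apply Rabs_le.
      enough (x0 - xdrift <= L <= x0 + xdrift) by lra.
      apply (Un_cv_eventually_bounded _ L _ _ (S N) Hcv).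
      intros [|i] Hi; [lia|].
      assert (Hdrift : Rabs (block_start T (S i) - x0) < xdrift).
      { apply adaptive_no_drift; [rewrite (HN i) | rewrite (HN (S i)), (HN i)]; lia. }
      apply Rabs_def2 in Hdrift. lra.
Qed.

End Adaptive.
End Dynamics.

Lemma drift_bounds (x0 u0 L xdrift : R) :
  -1 <= u0 <= 1 -> Rmin x0 u0 <= L <= Rmax x0 u0 -> Rabs (L - x0) <= xdrift ->
  if Rlt_dec x0 u0
  then x0 <= L <= Rmin 1 (x0 + xdrift)
  else Rmax (-1) (x0 - xdrift) <= L <= x0.
Proof.
  intros Hu HL Hd.
  assert (x0 - xdrift <= L <= x0 + xdrift)
    by (unfold Rabs in Hd; destruct (Rcase_abs (L - x0)); lra).
  destruct (Rlt_dec x0 u0) as [Hlt|Hge].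
  - rewrite Rmin_left, Rmax_right in HL by lra.
    split; [lra | apply Rmin_glb; lra].
  - rewrite Rmin_right, Rmax_left in HL by lra.
    split; [apply Rmax_lub; lra | lra].
Qed.

Theorem corollary1 (alpha beta x0 u0 : R) (s : nat)
  (ha0 : 0 <= alpha <= 1) (hb0 : 0 <= beta <= 1)
  (hab : 0 < alpha + beta <= 1) (hge : beta <= alpha)
  (hx0 : -1 <= x0 <= 1) (hu0 : -1 <= u0 <= 1) (hs : (1 <= s)%nat) :
  let eta := alpha / (1 - beta) in
  (* (a) fixed policy *)
  Un_cv (fun i => opinion alpha beta x0 u0 (clicks s (fun _ => s)) (i * s))
        (eta * x0 + (1 - eta) * u0)
  /\
  (* (b) decreasing policy *)
  (forall kappa : R, 1 < kappa ->
     Un_cv (fun i => opinion alpha beta x0 u0 (clicks s (T_dec kappa s)) (i * s)) x0)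
  /\
  (* (c) adaptive decreasing policy *)
  (forall (tau : nat) (xdrift : R), (1 <= tau)%nat -> 0 < xdrift ->
     forall T : nat -> nat,
       T O = s ->
       (forall i : nat,
          T (S i) =
            if Rle_dec xdrift
                 (Rabs (opinion alpha beta x0 u0 (clicks s T) (S i * s) - x0))
            then (T i - tau)%nat
            else T i) ->
       exists L : R,
         Un_cv (fun i => opinion alpha beta x0 u0 (clicks s T) (i * s)) L /\
         (if Rlt_dec x0 u0
          then x0 <= L <= Rmin 1 (x0 + xdrift)
          else Rmax (-1) (x0 - xdrift) <= L <= x0)).
Proof.
  intros eta.
  assert (hb : 0 <= beta) by lra.
  split; [|split].
  - exact (fixed_policy_cv alpha beta x0 u0 hb hge hab s hs).
  - exact (decreasing_policy_cv alpha beta x0 u0 hb hge hab s hs).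
  - intros tau xdrift htau hxd T _ hT.
    destruct (adaptive_policy_limit alpha beta x0 u0 hb hge hab s hs tau xdrift T htau hT hxd)
      as [L [Hcv [Hbetween Hdrift]]].
    exists L. split; [exact Hcv | exact (drift_bounds x0 u0 L xdrift hu0 Hbetween Hdrift)].
Qed.
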